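(* Let $(\mathcal V,\mathcal W,\lambda)$ be a FTvN system. Then: (a) A linear map $A:\mathcal V\to\mathcal V$ belongs to $\operatorname{Aut}(\mathcal V,\mathcal W,\lambda)$ if and only if $A$ is invertible and both $A$ and $A^{-1}$ are doubly stochastic. (b) If $\mathcal V$ is finite dimensional, every $D$ in the convex hull of $\operatorname{Aut}(\mathcal V,\mathcal W,\lambda)$ is doubly stochastic.
   Context: A Fan-Theobald-von Neumann (FTvN) system is a triple $(\mathcal V,\mathcal W,\lambda)$ where $\mathcal V,\mathcal W$ are real inner product spaces and $\lambda:\mathcal V\to\mathcal W$ is a map such that: (A1) $\|\lambda(x)\|=\|x\|$ for all $x$; (A2) $\langle x,y\rangle\le\langle\lambda(x),\lambda(y)\rangle$ for all $x,y$; (A3) for every $c\in\mathcal V$ and $q\in\lambda(\mathcal V)$ there exists $x$ with $\lambda(x)=q$ and $\langle c,x\rangle=\langle\lambda(c),\lambda(x)\rangle$. $[u]=\{z:\lambda(z)=\lambda(u)\}$; $x\prec y$ iff $x\in\operatorname{conv}[y]$. A linear map $D$ is doubly stochastic if $Dx\prec x$ for all $x$. $\operatorname{Aut}(\mathcal V,\mathcal W,\lambda)$ is the set of invertible linear maps $A:\mathcal V\to\mathcal V$ with $\lambda(Ax)=\lambda(x)$ for all $x$. *)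

From HB Require Import structures.
From mathcomp Require Import all_boot all_order all_algebra.
From mathcomp Require Import reals.
Set Implicit Arguments. Unset Strict Implicit. Unset Printing Implicit Defensive.
Import Order.TTheory GRing.Theory Num.Theory.
Local Open Scope ring_scope.

Section FTvN.
Variable R : realType.

Definition is_inner_product (V : lmodType R) (ip : V -> V -> R) : Prop :=
  [/\ (forall x y, ip x y = ip y x),
      (forall (a : R) x y z, ip (a *: x + y) z = a * ip x z + ip y z),
      (forall x, 0 <= ip x x) &
      (forall x, ip x x = 0 -> x = 0)].

Definition ipnorm (V : lmodType R) (ip : V -> V -> R) (x : V) : R :=
  Num.sqrt (ip x x).

Definition FTvN_system (V W : lmodType R) (ipV : V -> V -> R) (ipW : W -> W -> R)
  (lam : V -> W) : Prop :=
  [/\ is_inner_product ipV, is_inner_product ipW,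
      (forall x, ipnorm ipW (lam x) = ipnorm ipV x),
      (forall x y, ipV x y <= ipW (lam x) (lam y)) &
      (forall (c : V) (q : W), (exists u, lam u = q) ->
          exists x, lam x = q /\ ipV c x = ipW (lam c) (lam x))].

Definition conv_hull (V : lmodType R) (S : V -> Prop) (x : V) : Prop :=
  exists (n : nat) (t : 'I_n -> R) (p : 'I_n -> V),
    [/\ (forall i, 0 <= t i), \sum_(i < n) t i = 1,
        (forall i, S (p i)) & x = \sum_(i < n) t i *: p i].

Definition lam_class (V W : lmodType R) (lam : V -> W) (u : V) : V -> Prop :=
  fun z => lam z = lam u.

Definition majorized (V W : lmodType R) (lam : V -> W) (x y : V) : Prop :=
  conv_hull (lam_class lam y) x.

Definition is_linear (V : lmodType R) (D : V -> V) : Prop :=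
  forall (a : R) x y, D (a *: x + y) = a *: D x + D y.

Definition doubly_stochastic (V W : lmodType R) (lam : V -> W) (D : V -> V) : Prop :=
  is_linear D /\ forall x, majorized lam (D x) x.

Definition Aut (V W : lmodType R) (lam : V -> W) (A : V -> V) : Prop :=
  [/\ is_linear A, bijective A & forall x, lam (A x) = lam x].

Definition in_conv_Aut (V W : lmodType R) (lam : V -> W) (D : V -> V) : Prop :=
  exists (n : nat) (t : 'I_n -> R) (A : 'I_n -> V -> V),
    [/\ (forall i, 0 <= t i), \sum_(i < n) t i = 1,
        (forall i, Aut lam (A i)) &
        (forall x, D x = \sum_(i < n) t i *: A i x)].

Definition finite_dim (V : lmodType R) : Prop :=
  exists (n : nat) (e : 'I_n -> V), forall x : V,
    exists c : 'I_n -> R, x = \sum_(i < n) c i *: e i.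

End FTvN.

(* Every element of a class [x] has the norm of x, because lambda is
   norm-preserving; a convex combination of points of a sphere lies in the
   closed ball, and on the sphere only if it coincides with one of the points
   it combines.  Hence y in conv [x] forces |y| <= |x|, with equality only when
   y is in [x].  For part (a), A x in conv [x] and x = A^-1 (A x) in conv [A x]
   then give lambda (A x) = lambda x.  Part (b) is immediate, and needs no
   finite dimensionality: a convex combination of automorphisms maps x to a
   convex combination of points of [x]. *)

From HB Require Import structures.
From mathcomp Require Import all_boot all_order all_algebra.
From mathcomp Require Import reals ring.
Set Implicit Arguments. Unset Strict Implicit. Unset Printing Implicit Defensive.
Import Order.TTheory GRing.Theory Num.Theory.
Local Open Scope ring_scope.

Section InnerProduct.
Variables (R : realType) (V : lmodType R) (ip : V -> V -> R).
Hypothesis ip_inner : is_inner_product ip.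

Lemma ipDl x y z : ip (x + y) z = ip x z + ip y z.
Proof.
by case: ip_inner => _ ipDZ _ _; rewrite -[x]scale1r ipDZ mul1r scale1r.
Qed.

Lemma ip0l z : ip 0 z = 0.
Proof. by apply/(addrI (ip 0 z)); rewrite -ipDl !addr0. Qed.

Lemma ipZl a x z : ip (a *: x) z = a * ip x z.
Proof.
by case: ip_inner => _ ipDZ _ _; rewrite -[a *: x]addr0 ipDZ ip0l addr0.
Qed.

Lemma ipBl x y z : ip (x - y) z = ip x z - ip y z.
Proof. by rewrite ipDl -scaleN1r ipZl mulN1r. Qed.

Lemma ip_suml n (f : 'I_n -> V) z :
  ip (\sum_(i < n) f i) z = \sum_(i < n) ip (f i) z.
Proof. by elim/big_rec2: _ => [|i s1 s2 _ <-]; rewrite ?ip0l ?ipDl. Qed.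

Section ConvexCombination.
Variables (n : nat) (t : 'I_n -> R) (z : 'I_n -> V).
Hypothesis t_sum1 : \sum_(i < n) t i = 1.
Let y := \sum_(i < n) t i *: z i.

Lemma ip_conv_variance :
  \sum_(i < n) t i * ip (z i - y) (z i - y)
  = \sum_(i < n) t i * ip (z i) (z i) - ip y y.
Proof.
case: ip_inner => ipC _ _ _.
have expand i : t i * ip (z i - y) (z i - y)
    = t i * ip (z i) (z i) - 2 * ip (t i *: z i) y + ip y y * t i.
  by rewrite ipBl (ipC (z i)) (ipC y) !ipBl ipZl (ipC y (z i)); ring.
rewrite (eq_bigr _ (fun i _ => expand i)) big_split sumrB /= -mulr_sumr.
by rewrite -mulr_sumr t_sum1 -ip_suml -/y; ring.
Qed.

Hypothesis t_ge0 : forall i, 0 <= t i.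
Variable r : R.
Hypothesis z_sphere : forall i, ip (z i) (z i) = r.

Lemma ip_conv_sphere : \sum_(i < n) t i * ip (z i - y) (z i - y) = r - ip y y.
Proof.
rewrite ip_conv_variance (eq_bigr _ (fun i _ => congr1 _ (z_sphere i))).
by rewrite -mulr_suml t_sum1 mul1r.
Qed.

Lemma ip_conv_le : ip y y <= r.
Proof.
case: ip_inner => _ _ ip_ge0 _.
rewrite -subr_ge0 -ip_conv_sphere.
by apply: sumr_ge0 => i _; apply: mulr_ge0.
Qed.

Lemma ip_conv_eq : ip y y = r -> exists i, z i = y.
Proof.
case: ip_inner => _ _ ip_ge0 ip_eq0 yr.
have /psumr_eq0P var0 : \sum_(i < n) t i * ip (z i - y) (z i - y) = 0.
  by rewrite ip_conv_sphere yr subrr.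
have [i ti_neq0] : exists i, t i != 0.
  apply/existsP; apply: contraT; rewrite negb_exists => /forallP t0.
  by rewrite -(oner_eq0 R) -t_sum1 big1 // => i _; apply/eqP/negPn/t0.
exists i; apply/eqP; rewrite -subr_eq0; apply/eqP/ip_eq0.
have /eqP := var0 (fun j _ => mulr_ge0 (t_ge0 j) (ip_ge0 _)) i isT.
by rewrite mulf_eq0 (negPf ti_neq0) => /eqP.
Qed.

End ConvexCombination.
End InnerProduct.

Section Majorization.
Variables (R : realType) (V W : lmodType R) (lam : V -> W).

Lemma majorized_of_lam_eq (x y : V) : lam y = lam x -> majorized lam y x.
Proof.
move=> lam_yx; exists 1%N, (fun _ => 1), (fun _ => y).
by split; rewrite ?big_ord1 ?scale1r.
Qed.

Lemma Aut_doubly_stochastic (A : V -> V) : Aut lam A -> doubly_stochastic lam A.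
Proof. by case=> linA _ lamA; split=> // x; apply: majorized_of_lam_eq. Qed.

Lemma is_linear_can (A B : V -> V) :
  is_linear A -> cancel A B -> cancel B A -> is_linear B.
Proof. by move=> linA AK BK a x y; rewrite -{1}[x]BK -{1}[y]BK -linA AK. Qed.

Lemma Aut_can (A B : V -> V) :
  Aut lam A -> cancel A B -> cancel B A -> Aut lam B.
Proof.
case=> linA _ lamA AK BK; split; first exact: is_linear_can linA AK BK.
  by exists A.
by move=> x; rewrite -{2}[x]BK lamA.
Qed.

Lemma in_conv_Aut_doubly_stochastic (D : V -> V) :
  in_conv_Aut lam D -> doubly_stochastic lam D.
Proof.
case=> n [t [A [t_ge0 t_sum1 AutA D_eq]]]; split.
  move=> a x y; rewrite !D_eq scaler_sumr -big_split /=.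
  apply: eq_bigr => i _; case: (AutA i) => linA _ _.
  by rewrite linA scalerDr !scalerA mulrC.
move=> x; rewrite D_eq; exists n, t, (fun i => A i x); split=> // i.
by case: (AutA i) => _ _ lamA; rewrite /lam_class lamA.
Qed.

Variables (ipV : V -> V -> R) (ipW : W -> W -> R).
Hypothesis ipV_inner : is_inner_product ipV.
Hypothesis lam_norm : forall x, ipnorm ipW (lam x) = ipnorm ipV x.

Lemma lam_eq_ip x z : lam z = lam x -> ipV z z = ipV x x.
Proof.
case: ipV_inner => _ _ ip_ge0 _ lam_zx.
have := lam_norm z; rewrite lam_zx lam_norm /ipnorm => sqrt_eq.
by rewrite -(sqr_sqrtr (ip_ge0 z)) -sqrt_eq sqr_sqrtr.
Qed.

Lemma majorized_ip_le x y : majorized lam y x -> ipV y y <= ipV x x.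
Proof.
case=> n [t [p [t_ge0 t_sum1 p_class ->]]].
exact: (ip_conv_le ipV_inner t_sum1 t_ge0 (fun i => lam_eq_ip (p_class i))).
Qed.

Lemma majorized_ip_eq x y :
  majorized lam y x -> ipV y y = ipV x x -> lam y = lam x.
Proof.
case=> n [t [p [t_ge0 t_sum1 p_class ->]]] ip_eq.
have p_sphere i := lam_eq_ip (p_class i).
have [i <-] := ip_conv_eq ipV_inner t_sum1 t_ge0 p_sphere ip_eq.
exact: p_class.
Qed.

Lemma majorized_anti x y :
  majorized lam y x -> majorized lam x y -> lam y = lam x.
Proof.
move=> yx xy; apply: (majorized_ip_eq yx); apply: le_anti.
by rewrite (majorized_ip_le yx) (majorized_ip_le xy).
Qed.

End Majorization.

Theorem proposition9p4 (R : realType) (V W : lmodType R)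
  (ipV : V -> V -> R) (ipW : W -> W -> R) (lam : V -> W) :
  FTvN_system ipV ipW lam ->
  (forall A : V -> V, is_linear A ->
     (Aut lam A <->
      exists B : V -> V, [/\ cancel A B, cancel B A,
                             doubly_stochastic lam A & doubly_stochastic lam B]))
  /\
  (finite_dim V -> forall D : V -> V, in_conv_Aut lam D -> doubly_stochastic lam D).
Proof.
case=> ipV_inner _ lam_norm _ _; split=> [A linA|_ D]; last first.
  exact: in_conv_Aut_doubly_stochastic.
split=> [AutA | [B [AK BK [_ A_maj] [_ B_maj]]]].
  have [_ [B AK BK] _] := AutA.
  exists B; split=> //; apply: Aut_doubly_stochastic => //.
  exact: Aut_can AutA AK BK.
split=> //; first by exists B.
move=> x; apply: (majorized_anti ipV_inner lam_norm (A_maj x)).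
by have := B_maj (A x); rewrite AK.
Qed.
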